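(* Let $\mathbb{F}$ be a field with $\mathrm{char}(\mathbb{F})\neq 2$ and let $L$ be a finite-dimensional Lie algebra over $\mathbb{F}$ of breadth $1$. Then $L$ is nilpotent if and only if $[L,L]\subseteq Z(L)$.
   Context: For $x\in L$, $b(x)=\mathrm{rank}(\mathrm{ad}_x)$ and the breadth of $L$ is $b(L)=\max\{b(x)\mid x\in L\}$. $Z(L)$ denotes the center of $L$. *)

From HB Require Import structures.
From mathcomp Require Import all_boot all_order all_algebra.
Set Implicit Arguments. Unset Strict Implicit. Unset Printing Implicit Defensive.
Import GRing.Theory.
Local Open Scope ring_scope.

Definition is_lie_bracket (F : fieldType) (L : vectType F) (br : L -> L -> L) : Prop :=
  [/\ (forall x : L, linear (br x)),
      (forall y : L, linear (fun x => br x y)),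
      (forall x : L, br x x = 0) &
      (forall x y z : L, br x (br y z) + br y (br z x) + br z (br x y) = 0)].

Definition ad (F : fieldType) (L : vectType F) (br : L -> L -> L) (x : L) : 'End(L) :=
  linfun (br x).

Definition bx (F : fieldType) (L : vectType F) (br : L -> L -> L) (x : L) : nat :=
  \dim (limg (ad br x)).

Definition has_breadth (F : fieldType) (L : vectType F) (br : L -> L -> L) (n : nat) : Prop :=
  (exists x : L, bx br x = n) /\ (forall x : L, (bx br x <= n)%N).

Definition brv (F : fieldType) (L : vectType F) (br : L -> L -> L)
    (U V : {vspace L}) : {vspace L} :=
  (<< [seq br u v | u <- (vbasis U : seq L), v <- (vbasis V : seq L)] >>)%VS.

Fixpoint lcs (F : fieldType) (L : vectType F) (br : L -> L -> L) (k : nat) : {vspace L} :=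
  match k with
  | 0 => fullv
  | k'.+1 => brv br fullv (lcs br k')
  end.

Definition lie_nilpotent (F : fieldType) (L : vectType F) (br : L -> L -> L) : Prop :=
  exists k : nat, lcs br k = 0%VS.

Definition in_center (F : fieldType) (L : vectType F) (br : L -> L -> L) (z : L) : Prop :=
  forall y : L, br z y = 0.

From HB Require Import structures.
From mathcomp Require Import all_boot all_order all_algebra.
Set Implicit Arguments. Unset Strict Implicit. Unset Printing Implicit Defensive.
Import GRing.Theory.
Local Open Scope ring_scope.

(* If [L,L] is central then L^2 = [L,[L,L]] = 0.  Conversely, if L is
   nilpotent then every ad_x is nilpotent, and an endomorphism of rank at most 1
   that is nilpotent squares to zero, so [x,[x,z]] = 0.  Polarizing gives
   [x,[y,z]] = -[y,[x,z]]; if the right-hand side is nonzero it spans the image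
   of ad_y, so [y,z] is a multiple of it and [x,[y,z]] is a multiple of
   [x,[y,[x,z]]] = -[y,[x,[x,z]]] = 0.  Hence [x,[y,z]] = 0 always, i.e. [L,L] is
   central. *)

Section RankOne.
Variables (F : fieldType) (V : vectType F) (f : 'End(V)).
Hypothesis rank_le1 : (\dim (limg f) <= 1)%N.

Lemma limg_rank1 v : v != 0 -> v \in limg f -> limg f = <[v]>%VS.
Proof.
by move=> v0 fv; apply/eqP; rewrite eq_sym eqEdim dim_vline v0 rank_le1 andbT -memvE.
Qed.

Lemma iter_lfun_line (v : V) (k : F) m :
  f v = k *: v -> iter m f v = k ^+ m *: v.
Proof.
move=> fv; elim: m => [|m IHm]; first by rewrite scale1r.
by rewrite iterS IHm linearZ /= fv scalerA exprSr.
Qed.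

Lemma nilpotent_rank1_sqr_eq0 n :
  (forall v, iter n f v = 0) -> forall v, f (f v) = 0.
Proof.
move=> fn0 v; have [->|fv0] := eqVneq (f v) 0; first exact: linear0.
have /vlineP[k fk] : f (f v) \in <[f v]>%VS.
  by rewrite -limg_rank1 // memv_img ?memvf.
move: (fn0 (f v)); rewrite (iter_lfun_line _ fk) => /eqP.
rewrite scaler_eq0 (negbTE fv0) orbF expf_eq0 => /andP[_ /eqP k0].
by rewrite fk k0 scale0r.
Qed.

End RankOne.

Section LieAlgebra.
Variables (F : fieldType) (L : vectType F) (br : L -> L -> L).
Hypothesis lieL : is_lie_bracket br.

Let br_linear x : linear (br x). Proof. by case: lieL. Qed.
Let br_linear_l y : linear (br^~ y). Proof. by case: lieL. Qed.

Definition lie_brl x : {linear L -> L} :=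
  HB.pack (br x) (GRing.isLinear.Build F L L *:%R (br x) (br_linear x)).
Definition lie_brr y : {linear L -> L} :=
  HB.pack (br^~ y) (GRing.isLinear.Build F L L *:%R (br^~ y) (br_linear_l y)).

Lemma lie_brDl x y z : br (x + y) z = br x z + br y z.
Proof. exact: (linearD (lie_brr z)). Qed.

Lemma lie_brDr x y z : br x (y + z) = br x y + br x z.
Proof. exact: (linearD (lie_brl x)). Qed.

Lemma lie_brZr x a y : br x (a *: y) = a *: br x y.
Proof. exact: (linearZ_LR (lie_brl x)). Qed.

Lemma lie_brZl a x y : br (a *: x) y = a *: br x y.
Proof. exact: (linearZ_LR (lie_brr y)). Qed.

Lemma lie_br_sumr x I (r : seq I) (P : pred I) (G : I -> L) :
  br x (\sum_(i <- r | P i) G i) = \sum_(i <- r | P i) br x (G i).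
Proof. exact: (raddf_sum (lie_brl x)). Qed.

Lemma lie_br_suml y I (r : seq I) (P : pred I) (G : I -> L) :
  br (\sum_(i <- r | P i) G i) y = \sum_(i <- r | P i) br (G i) y.
Proof. exact: (raddf_sum (lie_brr y)). Qed.

Lemma lie_br0r x : br x 0 = 0.
Proof. exact: (linear0 (lie_brl x)). Qed.

Lemma adE x y : ad br x y = br x y.
Proof. exact: (lfunE (lie_brl x)). Qed.

Lemma lie_br_anticomm x y : br x y = - br y x.
Proof.
case: lieL => _ _ brxx _; apply/eqP; rewrite -addr_eq0.
by move: (brxx (x + y)); rewrite lie_brDl !lie_brDr !brxx add0r addr0 addrC => ->.
Qed.

Lemma mem_brv (U V : {vspace L}) u v : u \in U -> v \in V -> br u v \in brv br U V.
Proof.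
move=> uU vV; rewrite (coord_vbasis vV) lie_br_sumr.
apply: memv_suml => j _; rewrite lie_brZr; apply: memvZ.
rewrite (coord_vbasis uU) lie_br_suml.
apply: memv_suml => i _; rewrite lie_brZl; apply: memvZ.
apply/memv_span/allpairsP; exists ((vbasis U)`_i, (vbasis V)`_j).
by rewrite !mem_nth ?size_tuple.
Qed.

Lemma brv_sub (U V W : {vspace L}) :
  (forall u v, u \in U -> v \in V -> br u v \in W) -> (brv br U V <= W)%VS.
Proof.
move=> brUVW; apply/span_subvP => w /allpairsP[[u v] [uU vV ->]].
exact: brUVW (vbasis_mem uU) (vbasis_mem vV).
Qed.

Lemma iter_br_mem_lcs n x y : iter n (br x) y \in lcs br n.
Proof. by elim: n => [|n IHn]; [exact: memvf | exact: mem_brv (memvf x) IHn]. Qed.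

Lemma in_center_brv (U V : {vspace L}) z :
  (forall u v y, br (br u v) y = 0) -> z \in brv br U V -> in_center br z.
Proof.
move=> brbr0 zUV y; apply/eqP.
have sub_ker : (brv br U V <= lker (linfun (lie_brr y)))%VS.
  by apply: brv_sub => u v _ _; rewrite memv_ker lfunE /= brbr0.
by move: (subvP sub_ker z zUV); rewrite memv_ker lfunE.
Qed.

Lemma lie_nilpotent_of_central_derived :
  (forall z, z \in brv br fullv fullv -> in_center br z) -> lie_nilpotent br.
Proof.
move=> central; exists 2%N; apply/eqP; rewrite -subv0 /=.
by apply: brv_sub => u v _ vL'; rewrite memv0 lie_br_anticomm central ?oppr0.
Qed.

Section Breadth1.
Hypothesis breadth_le1 : forall x, (bx br x <= 1)%N.
Hypothesis nilL : lie_nilpotent br.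

Lemma ad_sqr_eq0 x y : br x (br x y) = 0.
Proof.
have [n lcs_n0] := nilL.
have adn0 v : iter n (ad br x) v = 0.
  have -> : iter n (ad br x) v = iter n (br x) v.
    by elim: n {lcs_n0} => //= n ->; rewrite adE.
  by have := iter_br_mem_lcs n x v; rewrite lcs_n0 memv0 => /eqP.
by rewrite -!adE (nilpotent_rank1_sqr_eq0 (breadth_le1 x) adn0).
Qed.

Lemma ad_anticomm x y z : br x (br y z) = - br y (br x z).
Proof.
apply/eqP; rewrite -addr_eq0.
move: (ad_sqr_eq0 (x + y) z); rewrite !lie_brDl !lie_brDr !ad_sqr_eq0.
by rewrite add0r addr0 => /eqP.
Qed.

Lemma br_br_eq0 x y z : br x (br y z) = 0.
Proof.
have [yxz0|yxz0] := eqVneq (br y (br x z)) 0; first by rewrite ad_anticomm yxz0 oppr0.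
have br_limg_ad v : br y v \in limg (ad br y) by rewrite -adE memv_img ?memvf.
have /vlineP[k ->] : br y z \in <[br y (br x z)]>%VS.
  by rewrite -(limg_rank1 (breadth_le1 y)) ?br_limg_ad.
by rewrite lie_brZr ad_anticomm ad_sqr_eq0 lie_br0r oppr0 scaler0.
Qed.

End Breadth1.

End LieAlgebra.

Theorem proposition2p3 (F : fieldType) (L : vectType F) (br : L -> L -> L) :
  ~~ (2%N \in [pchar F]) ->
  is_lie_bracket br ->
  has_breadth br 1 ->
  (lie_nilpotent br <->
   (forall z : L, z \in brv br fullv fullv -> in_center br z)).
Proof.
move=> _ lieL [_ breadth_le1]; split; last exact: lie_nilpotent_of_central_derived.
move=> nilL z; apply: (in_center_brv lieL) => u v y.
by rewrite (lie_br_anticomm lieL) (br_br_eq0 lieL breadth_le1 nilL) oppr0.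
Qed.
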